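(* Let $n\geq1$. For all $a,r\in\mathbb N$ and all $l\in\mathbb N$ with $l\leq n$, $$\sum_{i=0}^l(-1)^i\binom{l}{i}\sum_{j=0}^{n-l+1}(-1)^{n-l+1+j}\binom{n-l+1}{j}\overline{(r+i+j,\,a+r+j)}=\bar0.$$
   Context: $\Lambda_{2,n}=\{\alpha\in\mathbb N^2:1\leq\alpha_1+\alpha_2\leq n\}$, $\lambda_{2,n}=|\Lambda_{2,n}|$, and for $v\in\mathbb N^2$, $\bar v=\big(\binom{v_1}{\alpha_1}\binom{v_2}{\alpha_2}\big)_{\alpha\in\Lambda_{2,n}}\in\mathbb C^{\lambda_{2,n}}$; $\bar0$ is the zero vector. *)

From HB Require Import structures.
From mathcomp Require Import all_boot all_order all_algebra.
Set Implicit Arguments. Unset Strict Implicit. Unset Printing Implicit Defensive.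
Import Order.TTheory GRing.Theory Num.Theory.
Local Open Scope ring_scope.

(* Lambda_{2,n} = { alpha in N^2 : 1 <= alpha_1 + alpha_2 <= n }, realized as a
   finite subtype of 'I_n.+1 * 'I_n.+1 (each coordinate is automatically <= n). *)
Definition Lambda2 (n : nat) : predArgType :=
  {alpha : 'I_n.+1 * 'I_n.+1 | (0 < alpha.1 + alpha.2 <= n)%N}.

Definition vbar (C : numClosedFieldType) (n : nat) (v : nat * nat)
  : {ffun Lambda2 n -> C} :=
  [ffun alpha : Lambda2 n =>
     ('C(v.1, (val alpha).1) * 'C(v.2, (val alpha).2))%:R].

From mathcomp Require Import all_boot all_algebra.
From mathcomp Require Import ring zify.
Set Implicit Arguments. Unset Strict Implicit. Unset Printing Implicit Defensive.
Import GRing.Theory.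
Local Open Scope ring_scope.

(* Let D be the forward difference on functions nat -> R.  An alternating binomial
   sum  \sum_j (-1)^j C(m, j) F(x + j)  equals  (-1)^m D^m F(x), and D^m kills every
   function of difference degree < m; degrees add under products, and x |-> C(c + x, p)
   has degree p.  In entry alpha of the vector, the sum over i is +-D^l of
   x |-> C(r + x, alpha_1) at j, of degree alpha_1 - l (or zero if l > alpha_1); times
   j |-> C(a + r + j, alpha_2) this has degree at most alpha_1 + alpha_2 - l <= n - l,
   so the sum over j, a difference of order n - l + 1, vanishes. *)

Section FiniteDifferences.

Variable R : pzRingType.
Implicit Types (f g : nat -> R).

Definition fdiff f : nat -> R := fun x => f x.+1 - f x.

Definition ddeg_le (k : nat) f := forall x, iter k.+1 fdiff f x = 0.

Lemma eq_iter_fdiff k f g : f =1 g -> iter k fdiff f =1 iter k fdiff g.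
Proof. by move=> eq_fg; elim: k => [|k IHk] x //=; rewrite /fdiff !IHk. Qed.

Lemma iter_fdiffD k f g x :
  iter k fdiff (f \+ g) x = iter k fdiff f x + iter k fdiff g x.
Proof. by elim: k x => [|k IHk] x //=; rewrite /fdiff !IHk addrACA opprD. Qed.

Lemma iter_fdiffMl k (c : R) f x :
  iter k fdiff (fun y => c * f y) x = c * iter k fdiff f x.
Proof. by elim: k x => [|k IHk] x //=; rewrite /fdiff !IHk mulrBr. Qed.

Lemma iter_fdiffMr k (c : R) f x :
  iter k fdiff (fun y => f y * c) x = iter k fdiff f x * c.
Proof. by elim: k x => [|k IHk] x //=; rewrite /fdiff !IHk mulrBl. Qed.

Lemma iter_fdiff_shift k f x :
  iter k fdiff (fun y => f y.+1) x = iter k fdiff f x.+1.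
Proof. by elim: k x => [|k IHk] x //=; rewrite /fdiff !IHk. Qed.

Lemma iter_fdiffE m f x :
  (-1) ^+ m * iter m fdiff f x
  = \sum_(j < m.+1) (-1) ^+ j * 'C(m, j)%:R * f (x + j)%N.
Proof.
elim: m x => [|m IHm] x; first by rewrite big_ord1 addn0 !mul1r.
have -> : (-1) ^+ m.+1 * iter m.+1 fdiff f x
          = (-1) ^+ m * iter m fdiff f x - (-1) ^+ m * iter m fdiff f x.+1.
  by rewrite exprS mulN1r mulNr /= /fdiff mulrBr opprB.
rewrite !IHm [in RHS]big_ord_recl.
rewrite [X in X - _ = _](_ : _ = \sum_(j < m.+2) (-1) ^+ j * 'C(m, j)%:R * f (x + j)%N);
  last by rewrite [RHS]big_ord_recr /= bin_small // mulr0 mul0r addr0.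
rewrite [X in X - _ = _]big_ord_recl -addrA; congr (_ + _); first by rewrite !bin0.
rewrite -sumrB; apply: eq_bigr => j _.
rewrite lift0 binS natrD exprS mulN1r !mulNr mulrDr mulrDl opprD.
by rewrite addnS addSn.
Qed.

Lemma eq_ddeg_le k f g : f =1 g -> ddeg_le k f -> ddeg_le k g.
Proof. by move=> eq_fg df x; rewrite -(eq_iter_fdiff _ eq_fg). Qed.

Lemma ddeg_leS k f : ddeg_le k.+1 f <-> ddeg_le k (fdiff f).
Proof. by split=> df x; move: (df x); rewrite [iter k.+2 _ _]iterSr. Qed.

Lemma ddeg_leW k k' f : (k <= k')%N -> ddeg_le k f -> ddeg_le k' f.
Proof.
move=> /subnKC <-; elim: (k' - k)%N => [|d IHd] df; first by rewrite addn0.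
by move=> x; rewrite addnS iterS /fdiff !IHd // subrr.
Qed.

Lemma iter_fdiff_eq0 k m f x : ddeg_le k f -> (k < m)%N -> iter m fdiff f x = 0.
Proof.
move=> df lt_km; rewrite -(ltn_predK lt_km).
by apply: (ddeg_leW _ df); rewrite -ltnS (ltn_predK lt_km).
Qed.

Lemma ddeg_leD k f g : ddeg_le k f -> ddeg_le k g -> ddeg_le k (f \+ g).
Proof. by move=> df dg x; rewrite iter_fdiffD df dg addr0. Qed.

Lemma ddeg_le_shift k f : ddeg_le k f -> ddeg_le k (fun x => f x.+1).
Proof. by move=> df x; rewrite iter_fdiff_shift. Qed.

Lemma ddeg_le0_const f : ddeg_le 0 f -> f =1 fun=> f 0%N.
Proof. by move=> df; elim=> // x <-; apply/eqP; rewrite -subr_eq0; apply/eqP/df. Qed.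

Lemma ddeg_leM a b f g : ddeg_le a f -> ddeg_le b g -> ddeg_le (a + b) (f \* g).
Proof.
elim: a b f g => [|a IHa] b f g df dg.
  apply: (@eq_ddeg_le _ (fun x => f 0%N * g x)) => [x|].
    by rewrite /= (ddeg_le0_const df x).
  by move=> x; rewrite iter_fdiffMl dg mulr0.
elim: b f g df dg => [|b IHb] f g df dg.
  apply: (@eq_ddeg_le _ (fun x => f x * g 0%N)) => [x|].
    by rewrite /= (ddeg_le0_const dg x).
  by move=> x; rewrite iter_fdiffMr addn0 df mul0r.
rewrite addnS; apply/ddeg_leS.
have leibniz : (fun x => f x.+1) \* fdiff g \+ fdiff f \* g =1 fdiff (f \* g).
  by move=> x; rewrite /= /fdiff mulrBr mulrBl addrA subrK.
apply: eq_ddeg_le leibniz _; apply: ddeg_leD.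
  by apply: IHb; [apply: ddeg_le_shift | apply/ddeg_leS].
by rewrite addSnnS; apply: IHa => //; apply/ddeg_leS.
Qed.

Lemma ddeg_le_iter_fdiff k l f : ddeg_le k f -> ddeg_le (k - l) (iter l fdiff f).
Proof.
move=> df x; rewrite -iterD addSn.
by apply: (ddeg_leW _ df); rewrite addnC -leq_subLR.
Qed.

Definition shifted_binomial (c p : nat) : nat -> R := fun x => 'C(c + x, p)%:R.

Lemma fdiff_shifted_binomial (c p : nat) :
  fdiff (shifted_binomial c p.+1) =1 shifted_binomial c p.
Proof.
by move=> x; rewrite /fdiff /shifted_binomial addnS binS natrD addrAC subrr add0r.
Qed.

Lemma ddeg_le_shifted_binomial (c p : nat) : ddeg_le p (shifted_binomial c p).
Proof.
elim: p => [|p IHp]; first by move=> x; rewrite /= /fdiff /shifted_binomial !bin0 subrr.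
apply/ddeg_leS; apply: eq_ddeg_le IHp => x.
by rewrite fdiff_shifted_binomial.
Qed.

End FiniteDifferences.

Arguments fdiff {R}.

Lemma mulrz_sign_nat (R : pzRingType) (x : R) (k c : nat) :
  x *~ ((-1) ^+ k * c%:Z) = x * ((-1) ^+ k * c%:R).
Proof. by rewrite -mulrzr intrM intr_sign. Qed.

Lemma alternating_double_sum_binomial (R : comNzRingType) (n l p q a r : nat) :
  (p + q <= n)%N -> (l <= n)%N ->
  \sum_(i < l.+1)
     (\sum_(j < (n - l + 1).+1)
          ('C(r + i + j, p) * 'C(a + r + j, q))%:R
            *~ ((-1) ^+ (n - l + 1 + j) * ('C(n - l + 1, j))%:Z))
       *~ ((-1) ^+ i * ('C(l, i))%:Z)
  = 0 :> R.
Proof.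
move=> hpq hl; set m := (n - l + 1)%N.
set f := shifted_binomial R r p; set g := shifted_binomial R (a + r) q.
have inner j : \sum_(i < l.+1)
     ('C(r + i + j, p) * 'C(a + r + j, q))%:R
       *~ ((-1) ^+ (m + j) * ('C(m, j))%:Z) *~ ((-1) ^+ i * ('C(l, i))%:Z)
  = (-1) ^+ (m + j) * 'C(m, j)%:R * g j * ((-1) ^+ l * iter l fdiff f j).
  rewrite iter_fdiffE mulr_sumr; apply: eq_bigr => i _.
  rewrite !mulrz_sign_nat /f /g /shifted_binomial natrM.
  (* [/=] unifies the ring structure instances, which [ring] needs. *)
  rewrite (addnAC r i j) addnA /=; ring.
under eq_bigr do rewrite mulrz_suml.
rewrite exchange_big /=; under eq_bigr do rewrite inner.
have [lt_pl | le_lp] := ltnP p l.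
  have Dl_f_eq0 j : iter l fdiff f j = 0.
    exact: iter_fdiff_eq0 j (ddeg_le_shifted_binomial _ _ _) lt_pl.
  by apply: big1 => j _; rewrite Dl_f_eq0 !mulr0.
have -> : \sum_(j < m.+1)
     (-1) ^+ (m + j) * 'C(m, j)%:R * g j * ((-1) ^+ l * iter l fdiff f j)
  = (-1) ^+ (m + l) * ((-1) ^+ m * iter m fdiff (g \* iter l fdiff f) 0%N).
  rewrite iter_fdiffE mulr_sumr; apply: eq_bigr => j _.
  rewrite add0n !exprD /=; ring.
have deg_prod : ddeg_le (q + (p - l)) (g \* iter l fdiff f).
  exact: ddeg_leM (ddeg_le_shifted_binomial _ _ _)
                  (ddeg_le_iter_fdiff l (ddeg_le_shifted_binomial _ _ _)).
by rewrite (iter_fdiff_eq0 _ deg_prod) ?mulr0 // /m; lia.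
Qed.

Theorem corollary2p13 (C : numClosedFieldType) (n : nat) (hn : (1 <= n)%N)
  (a r l : nat) (hl : (l <= n)%N) :
  \sum_(i < l.+1)
     (\sum_(j < (n - l + 1).+1)
          vbar C n (r + i + j, a + r + j)%N
            *~ ((-1) ^+ (n - l + 1 + j) * ('C(n - l + 1, j))%:Z))
       *~ ((-1) ^+ i * ('C(l, i))%:Z)
  = 0.
Proof.
apply/ffunP => alpha; rewrite sum_ffunE ffunE.
have /andP[_ hpq] := valP alpha.
rewrite -[RHS](alternating_double_sum_binomial C a r hpq hl); apply: eq_bigr => i _.
rewrite ffunMzE sum_ffunE; congr (_ *~ _); apply: eq_bigr => j _.
by rewrite ffunMzE ffunE.
Qed.
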